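(* Let $\mathfrak A$ and $\mathcal A$ be Banach algebras with $\mathcal A$ a Banach $\mathfrak A$-bimodule with compatible actions, and let $\mathcal B=\mathcal A\oplus\mathfrak A^\#$ as defined below. Let ''P'' denote any one of the three properties: module amenable, module approximately amenable, module $w^*$-approximately amenable. Then the following are equivalent: (i) $\mathcal A$ is $\mathfrak A^\#$-module P; (ii) $\mathcal B$ is $\mathfrak A^\#$-module P. If, in addition, $\mathcal A$ is a left or right essential $\mathfrak A$-module, then (i) and (ii) are also equivalent to (iii) $\mathcal A$ is $\mathfrak A$-module P.
   Context: Compatible actions: $\alpha\cdot(ab)=(\alpha\cdot a)b$, $(ab)\cdot\alpha=a(b\cdot\alpha)$. $\mathfrak A^\#=\mathfrak A\oplus\mathbb C$ is the unitization; $\mathcal A$ is an $\mathfrak A^\#$-bimodule via $(\alpha,\lambda)\cdot a=\alpha\cdot a+\lambda a$, $a\cdot(\alpha,\lambda)=a\cdot\alpha+\lambda a$. $\mathcal B=\mathcal A\oplus\mathfrak A^\#$ with product $(a,u)\bullet(b,v)=(ab+av+ub,uv)$ (where $av:=a\cdot v$, $ub:=u\cdot b$) and $\mathfrak A^\#$-actions $u\cdot(a,v)=(u\cdot a,uv)$, $(a,v)\cdot u=(a\cdot u,vu)$; it is a unital Banach algebra and $\mathfrak A^\#$-bimodule with compatible actions. $\mathcal A$ is left essential if $\mathrm{span}\{\alpha\cdot a\}$ is dense in $\mathcal A$ (right similarly). For a Banach algebra $\mathcal C$ that is a Banach $\mathfrak C$-bimodule with compatible actions: a Banach $\mathcal C$-$\mathfrak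 C$-module is a Banach space $X$ which is a Banach $\mathcal C$-bimodule and $\mathfrak C$-bimodule with $\alpha\cdot(c\cdot x)=(\alpha\cdot c)\cdot x$, $c\cdot(\alpha\cdot x)=(c\cdot\alpha)\cdot x$, $c\cdot(x\cdot\alpha)=(c\cdot x)\cdot\alpha$ and analogous right-sided identities; commutative if $\alpha\cdot x=x\cdot\alpha$. $X^*$ has the dual actions. A module derivation $D:\mathcal C\to Y$ is additive, bounded ($\|D(c)\|\le M\|c\|$), with $D(cd)=D(c)\cdot d+c\cdot D(d)$, $D(\alpha\cdot c)=\alpha\cdot D(c)$, $D(c\cdot\alpha)=D(c)\cdot\alpha$. $\mathcal C$ is $\mathfrak C$-module amenable (resp. approximately amenable, resp. $w^*$-approximately amenable) if for every commutative Banach $\mathcal C$-$\mathfrak C$-module $X$ and every module derivation $D:\mathcal C\to X^*$ there is $f\in X^*$ with $D(c)=c\cdot f-f\cdot c$ (resp. a net $(f_i)\subseteq X^*$ with $c\cdot f_i-f_i\cdot c\to D(c)$ in norm, resp. weak$^*$, for all $c$). *)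

From mathcomp Require Import all_boot all_order all_algebra.
From mathcomp Require Import all_classical all_reals all_analysis.
From mathcomp Require Export complex.
Import numFieldNormedType.Exports.
Import Order.TTheory GRing.Theory Num.Theory.

Set Implicit Arguments.
Unset Strict Implicit.
Unset Printing Implicit Defensive.

Local Open Scope ring_scope.

Section ModuleAmenability.
Context {R : realType}.
Local Notation K := (complex R).

Definition is_dual (X : normedModType K) (f : X -> K) : Prop :=
  (forall (k : K) (x y : X), f (k *: x + y) = k * f x + f y) /\
  exists M : K, forall x : X, `|f x| <= M * `|x|.

Definition bilin (U V W : lmodType K) (m : U -> V -> W) : Prop :=
  (forall (k : K) (u u' : U) (v : V), m (k *: u + u') v = k *: m u v + m u' v) /\
  (forall (k : K) (u : U) (v v' : V), m u (k *: v + v') = k *: m u v + m u v').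

Definition banach_algebra (A : completeNormedModType K) (mul : A -> A -> A) : Prop :=
  ((bilin mul) /\ ((forall a b c : A, mul (mul a b) c = mul a (mul b c))) /\ ((forall a b : A, `|mul a b| <= `|a| * `|b|))).

Definition banach_bimodule (C : lmodType K) (normC : C -> K) (mulC : C -> C -> C)
    (X : normedModType K) (l : C -> X -> X) (r : X -> C -> X) : Prop :=
  ((bilin l) /\ (bilin r) /\ ((forall c x, `|l c x| <= normC c * `|x|)) /\ ((forall c x, `|r x c| <= normC c * `|x|)) /\ ((forall c d x, l (mulC c d) x = l c (l d x))) /\ ((forall c d x, r x (mulC c d) = r (r x c) d)) /\ ((forall c d x, r (l c x) d = l c (r x d)))).

Definition compatible_actions (A C : Type) (mulC : C -> C -> C)
    (l : A -> C -> C) (r : C -> A -> C) : Prop :=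
  (forall alpha a b, l alpha (mulC a b) = mulC (l alpha a) b) /\
  (forall alpha a b, r (mulC a b) alpha = mulC a (r b alpha)).

Definition banach_CA_module
    (C : lmodType K) (normC : C -> K) (mulC : C -> C -> C)
    (A : lmodType K) (normA : A -> K) (mulA : A -> A -> A)
    (lAC : A -> C -> C) (rAC : C -> A -> C)
    (X : normedModType K) (lC : C -> X -> X) (rC : X -> C -> X)
    (lA : A -> X -> X) (rA : X -> A -> X) : Prop :=
  ((banach_bimodule normC mulC lC rC) /\ (banach_bimodule normA mulA lA rA) /\ (
      (forall alpha c x, lA alpha (lC c x) = lC (lAC alpha c) x)) /\ ((forall alpha c x, lC c (lA alpha x) = lC (rAC c alpha) x)) /\ ((forall alpha c x, lC c (rA x alpha) = rA (lC c x) alpha)) /\ (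
      (forall alpha c x, rA (rC x c) alpha = rC x (rAC c alpha))) /\ ((forall alpha c x, rC (rA x alpha) c = rC x (lAC alpha c))) /\ ((forall alpha c x, rC (lA alpha x) c = lA alpha (rC x c)))).

Definition commutative_module (A X : Type) (lA : A -> X -> X) (rA : X -> A -> X) :=
  forall alpha x, lA alpha x = rA x alpha.

(* Module derivation D : C -> X^*.  Elements of X^* are represented as
   functionals X -> K; the dual actions are
     (c.f)(x) = f(x.c),  (f.c)(x) = f(c.x)  (and likewise for A). *)
Definition module_derivation
    (C : lmodType K) (normC : C -> K) (mulC : C -> C -> C)
    (A : Type) (lAC : A -> C -> C) (rAC : C -> A -> C)
    (X : normedModType K) (lC : C -> X -> X) (rC : X -> C -> X)
    (lA : A -> X -> X) (rA : X -> A -> X) (D : C -> X -> K) : Prop :=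
  (((forall c, is_dual (D c))) /\ (
      (forall c d x, D (c + d) x = D c x + D d x)) /\ (
      (exists M : K, forall c x, `|D c x| <= M * normC c * `|x|)) /\ ((* D(cd) = D(c).d + c.D(d) *)
      (forall c d x, D (mulC c d) x = D c (lC d x) + D d (rC x c))) /\ (
      (forall alpha c x, D (lAC alpha c) x = D c (rA x alpha))) /\ (
      (forall alpha c x, D (rAC c alpha) x = D c (lA alpha x)))).

Definition directed (I : Type) (le : I -> I -> Prop) : Prop :=
  ((inhabited I) /\ ((forall i, le i i)) /\ ((forall i j k, le i j -> le j k -> le i k)) /\ ((forall i j, exists k, le i k /\ le j k))).

Inductive amen_kind := Amenable | ApproxAmenable | WStarApproxAmenable.

Definition amen_conclusion (P : amen_kind)
    (C : Type) (X : normedModType K) (lC : C -> X -> X) (rC : X -> C -> X)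
    (D : C -> X -> K) : Prop :=
  match P with
  | Amenable =>
      (* D is inner: D(c) = c.f - f.c *)
      exists f : X -> K, is_dual f /\
        forall c x, D c x = f (rC x c) - f (lC c x)
  | ApproxAmenable =>
      (* a net (f_i) in X^* with c.f_i - f_i.c -> D(c) in (operator) norm *)
      exists (I : Type) (le : I -> I -> Prop) (f : I -> X -> K),
        directed le /\ (forall i, is_dual (f i)) /\
        (forall c (e : K), 0 < e -> exists i0, forall i, le i0 i ->
          forall x, `|f i (rC x c) - f i (lC c x) - D c x| <= e * `|x|)
  | WStarApproxAmenable =>
      (* a net (f_i) in X^* with c.f_i - f_i.c -> D(c) weak-star *)
      exists (I : Type) (le : I -> I -> Prop) (f : I -> X -> K),
        directed le /\ (forall i, is_dual (f i)) /\
        (forall c x (e : K), 0 < e -> exists i0, forall i, le i0 i ->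
          `|f i (rC x c) - f i (lC c x) - D c x| < e)
  end.

Definition module_P (P : amen_kind)
    (C : lmodType K) (normC : C -> K) (mulC : C -> C -> C)
    (A : lmodType K) (normA : A -> K) (mulA : A -> A -> A)
    (lAC : A -> C -> C) (rAC : C -> A -> C) : Prop :=
  forall (X : completeNormedModType K)
         (lC : C -> X -> X) (rC : X -> C -> X)
         (lA : A -> X -> X) (rA : X -> A -> X),
    banach_CA_module normC mulC normA mulA lAC rAC lC rC lA rA ->
    commutative_module lA rA ->
    forall D : C -> X -> K,
      module_derivation normC mulC lAC rAC lC rC lA rA D ->
      amen_conclusion P lC rC D.

Definition unitz (A : normedModType K) : lmodType K := (A * K^o)%type.

Definition unitz_norm (A : normedModType K) (u : unitz A) : K :=
  `|u.1| + `|u.2|.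

Definition unitz_mul (A : normedModType K) (mulA : A -> A -> A)
    (u v : unitz A) : unitz A :=
  (mulA u.1 v.1 + u.2 *: v.1 + v.2 *: u.1, (u.2 : K) * (v.2 : K) : K^o).

Definition unitz_actl (A Ac : normedModType K) (l : A -> Ac -> Ac)
    (u : unitz A) (a : Ac) : Ac := l u.1 a + u.2 *: a.
Definition unitz_actr (A Ac : normedModType K) (r : Ac -> A -> Ac)
    (a : Ac) (u : unitz A) : Ac := r a u.1 + u.2 *: a.

Definition Bsp (A Ac : normedModType K) : lmodType K := (Ac * unitz A)%type.

Definition B_norm (A Ac : normedModType K) (w : Bsp A Ac) : K :=
  `|w.1| + unitz_norm w.2.

Definition B_mul (A Ac : normedModType K) (mulA : A -> A -> A)
    (mulAc : Ac -> Ac -> Ac) (l : A -> Ac -> Ac) (r : Ac -> A -> Ac)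
    (w z : Bsp A Ac) : Bsp A Ac :=
  (mulAc w.1 z.1 + unitz_actr r w.1 z.2 + unitz_actl l w.2 z.1,
   unitz_mul mulA w.2 z.2).

Definition B_actl (A Ac : normedModType K) (mulA : A -> A -> A)
    (l : A -> Ac -> Ac) (u : unitz A) (w : Bsp A Ac) : Bsp A Ac :=
  (unitz_actl l u w.1, unitz_mul mulA u w.2).
Definition B_actr (A Ac : normedModType K) (mulA : A -> A -> A)
    (r : Ac -> A -> Ac) (w : Bsp A Ac) (u : unitz A) : Bsp A Ac :=
  (unitz_actr r w.1 u, unitz_mul mulA w.2 u).

Definition left_essential (A Ac : normedModType K) (l : A -> Ac -> Ac) : Prop :=
  forall (a : Ac) (e : K), 0 < e ->
    exists (n : nat) (lam : 'I_n -> K) (al : 'I_n -> A) (b : 'I_n -> Ac),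
      `|a - \sum_(i < n) lam i *: l (al i) (b i)| < e.
Definition right_essential (A Ac : normedModType K) (r : Ac -> A -> Ac) : Prop :=
  forall (a : Ac) (e : K), 0 < e ->
    exists (n : nat) (lam : 'I_n -> K) (al : 'I_n -> A) (b : 'I_n -> Ac),
      `|a - \sum_(i < n) lam i *: r (b i) (al i)| < e.

End ModuleAmenability.

From mathcomp Require Import all_boot all_order all_algebra.
From mathcomp Require Import all_classical all_reals all_analysis.
From mathcomp Require Import complex.
From mathcomp Require Import ring.
Import numFieldNormedType.Exports.
Import Order.TTheory GRing.Theory Num.Theory.
Local Open Scope ring_scope.
Set Implicit Arguments. Unset Strict Implicit. Unset Printing Implicit Defensive.

(* The algebra B is unital with unit e = (0, (0, 1)), so on a Banach B-module X
   the maps P = e._ and Q = _.e are commuting contractive idempotents.  A module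
   derivation D : B -> X^* restricts to the copy of Acal inside B; if a functional
   f implements (or approximates) that restriction, then
     F = f o ((1 - P)(1 - Q) + PQ) + D(e) o (Q - P)
   implements (approximates) D itself, since the error of F at w in B and x in X
   is minus the error of f at the Acal-component of w and at x - Px - Qx.
   Conversely an Acal-module becomes a B-module through the projection B -> Acal.
   Finally, actions of the unitization restrict to actions of the algebra, and
   actions of the algebra extend to the unitization by letting the scalar part act
   by scalar multiplication; the only obstruction to the latter is that a module
   derivation is merely additive, and essentiality of Acal makes it C-homogeneous:
   D(k (alpha.a)) = D(alpha.a) . (k alpha) = k D(alpha.a). *)

Section Preliminaries.
Variable R : realType.
Local Notation K := (complex R).

Section Bilinear.
Variables (U V W : lmodType K) (m : U -> V -> W).
Hypothesis hm : bilin m.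

Lemma bilin0l v : m 0 v = 0.
Proof. by have := hm.1 (-1) 0 0 v; rewrite scaler0 addr0 scaleN1r addNr. Qed.

Lemma bilin0r u : m u 0 = 0.
Proof. by have := hm.2 (-1) u 0 0; rewrite scaler0 addr0 scaleN1r addNr. Qed.

Lemma bilinDl u u' v : m (u + u') v = m u v + m u' v.
Proof. by have := hm.1 1 u u' v; rewrite !scale1r. Qed.

Lemma bilinDr u v v' : m u (v + v') = m u v + m u v'.
Proof. by have := hm.2 1 u v v'; rewrite !scale1r. Qed.

Lemma bilinZl k u v : m (k *: u) v = k *: m u v.
Proof. by have := hm.1 k u 0 v; rewrite !addr0 bilin0l addr0. Qed.

Lemma bilinZr k u v : m u (k *: v) = k *: m u v.
Proof. by have := hm.2 k u v 0; rewrite !addr0 bilin0r addr0. Qed.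

Lemma bilinBl u u' v : m (u - u') v = m u v - m u' v.
Proof. by rewrite bilinDl -scaleN1r bilinZl scaleN1r. Qed.

Lemma bilinBr u v v' : m u (v - v') = m u v - m u v'.
Proof. by rewrite bilinDr -scaleN1r bilinZr scaleN1r. Qed.

End Bilinear.

Section DualSpace.
Variables (X : normedModType K) (f : X -> K).
Hypothesis hf : is_dual f.

Lemma dualD x y : f (x + y) = f x + f y.
Proof. by have := hf.1 1 x y; rewrite scale1r mul1r. Qed.

Lemma dual0 : f 0 = 0.
Proof. by have := hf.1 (-1) 0 0; rewrite scaler0 addr0 mulN1r addNr. Qed.

Lemma dualZ k x : f (k *: x) = k * f x.
Proof. by have := hf.1 k x 0; rewrite !addr0 dual0 addr0. Qed.

Lemma dualN x : f (- x) = - f x.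
Proof. by rewrite -scaleN1r dualZ mulN1r. Qed.

Lemma dualB x y : f (x - y) = f x - f y.
Proof. by rewrite dualD dualN. Qed.

End DualSpace.

Lemma ler_norm_coef (M a b : K) : 0 <= a -> 0 <= b -> a <= M * b -> a <= `|M| * b.
Proof.
move=> a0 b0 h; have Mb0 : 0 <= M * b by apply: le_trans h.
by rewrite -(ger0_norm b0) -normrM ger0_norm.
Qed.

Lemma dual_bounded (X : normedModType K) (f : X -> K) : is_dual f ->
  exists M : K, 0 <= M /\ forall x, `|f x| <= M * `|x|.
Proof.
case=> _ [M HM]; exists `|M|; split => // x.
exact: ler_norm_coef (HM x).
Qed.

Lemma dense_span_additive_eq0 (T1 T2 : Type) (V : normedModType K)
    (g : T1 -> T2 -> V) (phi : V -> K) :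
  (forall a b, phi (a + b) = phi a + phi b) ->
  (exists C, 0 <= C /\ forall c, `|phi c| <= C * `|c|) ->
  (forall (lam : K) s t, phi (lam *: g s t) = 0) ->
  (forall (a : V) (e : K), 0 < e -> exists (n : nat) (lam : 'I_n -> K)
      (s : 'I_n -> T1) (t : 'I_n -> T2),
      `|a - \sum_(i < n) lam i *: g (s i) (t i)| < e) ->
  forall c, phi c = 0.
Proof.
move=> phiD [C [C0 HC]] phi_g dense c.
have phi0 : phi 0 = 0 by apply: (addrI (phi 0)); rewrite -phiD !addr0.
apply/eqP; rewrite -normr_le0; apply/unstable.ler_gtP => e e0.
have C1 : 0 < C + 1 by rewrite ltr_pwDr.
have [n [lam [s [t hst]]]] := dense c (e / (C + 1)) (divr_gt0 e0 C1).
set y := \sum_(i < n) _ in hst.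
have phi_y : phi y = 0.
  by apply: (big_ind (fun v => phi v = 0)) => // u v hu hv; rewrite phiD hu hv addr0.
have -> : phi c = phi (c - y) by rewrite -[phi (c - y)]addr0 -phi_y -phiD subrK.
apply: le_trans (HC _) _; apply: le_trans (_ : (C + 1) * `|c - y| <= _).
  by apply: ler_wpM2r => //; rewrite lerDl.
by rewrite -ler_pdivlMl // mulrC ltW.
Qed.

Lemma amen_conclusion_pullback Pk (C C' : Type) (X : normedModType K)
    (lC : C -> X -> X) (rC : X -> C -> X) (D : C -> X -> K)
    (lC' : C' -> X -> X) (rC' : X -> C' -> X) (D' : C' -> X -> K) (g : C -> C') :
  (forall c x, lC' (g c) x = lC c x) -> (forall c x, rC' x (g c) = rC x c) ->
  (forall c x, D' (g c) x = D c x) ->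
  amen_conclusion Pk lC' rC' D' -> amen_conclusion Pk lC rC D.
Proof.
move=> hl hr hd; case: Pk => /=.
- by case=> f [Hf H]; exists f; split => // c x; rewrite -hd -hl -hr.
- case=> I [le [f [Hdir [Hf H]]]]; exists I, le, f; do 2 split => //.
  move=> c e e0; have [i0 Hi] := H (g c) e e0; exists i0 => i Hii x.
  by rewrite -hd -hl -hr; apply: Hi.
- case=> I [le [f [Hdir [Hf H]]]]; exists I, le, f; do 2 split => //.
  move=> c x e e0; have [i0 Hi] := H (g c) x e e0; exists i0 => i Hii.
  by rewrite -hd -hl -hr; apply: Hi.
Qed.

End Preliminaries.

Section Unitization.
Variable R : realType.
Local Notation K := (complex R).
Variables (A Ac : normedModType K) (mulA : A -> A -> A) (mulAc : Ac -> Ac -> Ac)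
  (l : A -> Ac -> Ac) (r : Ac -> A -> Ac).
Hypotheses (mulA_bilin : bilin mulA) (mulAc_bilin : bilin mulAc)
  (l_bilin : bilin l) (r_bilin : bilin r).

Definition unitz_in (a : A) : unitz A := (a, 0).

Lemma unitz_inZD k a b : unitz_in (k *: a + b) = k *: unitz_in a + unitz_in b.
Proof. by congr (_, _); rewrite /= scaler0 addr0. Qed.

Lemma unitz_norm_in a : unitz_norm (unitz_in a) = `|a|.
Proof. by rewrite /unitz_norm /= normr0 addr0. Qed.

Lemma unitz_mul_in a b : unitz_mul mulA (unitz_in a) (unitz_in b) = unitz_in (mulA a b).
Proof. by rewrite /unitz_mul /= !scale0r !addr0 mulr0. Qed.

Lemma unitz_actl_in al c : unitz_actl l (unitz_in al) c = l al c.
Proof. by rewrite /unitz_actl /= scale0r addr0. Qed.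

Lemma unitz_actr_in al c : unitz_actr r c (unitz_in al) = r c al.
Proof. by rewrite /unitz_actr /= scale0r addr0. Qed.

Lemma unitz_mulr0 u : unitz_mul mulA u 0 = 0.
Proof. by rewrite /unitz_mul /= (bilin0r mulA_bilin) scaler0 scale0r !addr0 mulr0. Qed.

Lemma unitz_mul0r u : unitz_mul mulA 0 u = 0.
Proof. by rewrite /unitz_mul /= (bilin0l mulA_bilin) scaler0 scale0r !addr0 mul0r. Qed.

Lemma unitz_actl_0r u : unitz_actl l u 0 = 0.
Proof. by rewrite /unitz_actl (bilin0r l_bilin) scaler0 addr0. Qed.

Lemma unitz_actl_0l c : unitz_actl l 0 c = 0.
Proof. by rewrite /unitz_actl (bilin0l l_bilin) scale0r addr0. Qed.

Lemma unitz_actr_0l u : unitz_actr r 0 u = 0.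
Proof. by rewrite /unitz_actr (bilin0l r_bilin) scaler0 addr0. Qed.

Lemma unitz_actr_0r c : unitz_actr r c 0 = 0.
Proof. by rewrite /unitz_actr (bilin0r r_bilin) scale0r addr0. Qed.

Definition inB (a : Ac) : Bsp A Ac := (a, 0).
Definition unitzB (u : unitz A) : Bsp A Ac := (0, u).
Definition oneB : Bsp A Ac := unitzB (0, 1).

Local Notation mulB := (B_mul mulA mulAc l r).

Lemma B_mul_fst w z :
  (mulB w z).1 = mulAc w.1 z.1 + unitz_actr r w.1 z.2 + unitz_actl l w.2 z.1.
Proof. by []. Qed.

Lemma B_mul_snd w z : (mulB w z).2 = unitz_mul mulA w.2 z.2.
Proof. by []. Qed.

Lemma B_actl_fst u w : (B_actl mulA l u w).1 = unitz_actl l u w.1. Proof. by []. Qed.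
Lemma B_actl_snd u w : (B_actl mulA l u w).2 = unitz_mul mulA u w.2. Proof. by []. Qed.
Lemma B_actr_fst u w : (B_actr mulA r w u).1 = unitz_actr r w.1 u. Proof. by []. Qed.
Lemma B_actr_snd u w : (B_actr mulA r w u).2 = unitz_mul mulA w.2 u. Proof. by []. Qed.

Lemma inBZD k a b : inB (k *: a + b) = k *: inB a + inB b.
Proof. by congr (_, _); rewrite /= scaler0 addr0. Qed.

Lemma inBD a b : inB (a + b) = inB a + inB b.
Proof. by congr (_, _); rewrite /= addr0. Qed.

Lemma B_decomp (w : Bsp A Ac) : w = inB w.1 + unitzB w.2.
Proof. by case: w => a u; congr (_, _); rewrite /= ?addr0 ?add0r. Qed.

Lemma B_norm_inB a : B_norm (inB a) = `|a|.
Proof. by rewrite /B_norm /unitz_norm /= !normr0 !addr0. Qed.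

Lemma B_norm_one : B_norm oneB = 1.
Proof. by rewrite /B_norm /unitz_norm /= !normr0 normr1 !add0r. Qed.

Lemma B_mul_inB a b : mulB (inB a) (inB b) = inB (mulAc a b).
Proof. by rewrite /B_mul /= unitz_actr_0r unitz_actl_0l !addr0 unitz_mulr0. Qed.

Lemma B_mul1l a : mulB oneB (inB a) = inB a.
Proof.
rewrite /B_mul /= (bilin0l mulAc_bilin) unitz_actr_0l unitz_mulr0.
by rewrite /unitz_actl /= (bilin0l l_bilin) scale1r !add0r.
Qed.

Lemma B_mul1r a : mulB (inB a) oneB = inB a.
Proof.
rewrite /B_mul /= (bilin0r mulAc_bilin) unitz_actl_0r unitz_mul0r.
by rewrite /unitz_actr /= (bilin0r r_bilin) scale1r !add0r !addr0.
Qed.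

Lemma B_mul11 : mulB oneB oneB = oneB.
Proof.
rewrite /B_mul /= (bilin0r mulAc_bilin) unitz_actl_0r unitz_actr_0l !addr0.
by rewrite /unitz_mul /= (bilin0r mulA_bilin) !scaler0 !addr0 mulr1.
Qed.

Lemma B_actl_one u : B_actl mulA l u oneB = unitzB u.
Proof.
rewrite /B_actl /= unitz_actl_0r /unitz_mul /= (bilin0r mulA_bilin).
by rewrite scaler0 scale1r !add0r mulr1; case: u.
Qed.

Lemma B_actl_inB u a : B_actl mulA l u (inB a) = inB (unitz_actl l u a).
Proof. by rewrite /B_actl /= unitz_mulr0. Qed.

Lemma B_actr_inB u a : B_actr mulA r (inB a) u = inB (unitz_actr r a u).
Proof. by rewrite /B_actr /= unitz_mul0r. Qed.


Section DerivationOnB.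
Variables (X : completeNormedModType K) (lB : Bsp A Ac -> X -> X) (rB : X -> Bsp A Ac -> X)
  (lU : unitz A -> X -> X) (rU : X -> unitz A -> X).
Hypothesis hX : banach_CA_module (B_norm (A:=A) (Ac:=Ac)) mulB
  (unitz_norm (A:=A)) (unitz_mul mulA) (B_actl mulA l) (B_actr mulA r) lB rB lU rU.
Hypothesis hcom : commutative_module lU rU.
Variable D : Bsp A Ac -> X -> K.
Hypothesis hD : module_derivation (B_norm (A:=A) (Ac:=Ac)) mulB
  (B_actl mulA l) (B_actr mulA r) lB rB lU rU D.

Let lB_bilin : bilin lB := hX.1.1.
Let rB_bilin : bilin rB := hX.1.2.1.
Let lB_norm := hX.1.2.2.1.
Let rB_norm := hX.1.2.2.2.1.
Let lB_mul := hX.1.2.2.2.2.1.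
Let rB_mul := hX.1.2.2.2.2.2.1.
Let lB_rB := hX.1.2.2.2.2.2.2.
Let lU_lB := hX.2.2.1.
Let lB_lU := hX.2.2.2.1.
Let lB_rU := hX.2.2.2.2.1.
Let rU_rB := hX.2.2.2.2.2.1.
Let rB_rU := hX.2.2.2.2.2.2.1.
Let rB_lU := hX.2.2.2.2.2.2.2.
Let D_dual := hD.1.
Let D_add := hD.2.1.
Let D_bounded := hD.2.2.1.
Let D_mul := hD.2.2.2.1.
Let D_lU := hD.2.2.2.2.1.
Let D_rU := hD.2.2.2.2.2.

Lemma inB_CA_module : banach_CA_module Num.norm mulAc (unitz_norm (A:=A)) (unitz_mul mulA)
  (unitz_actl l) (unitz_actr r) (fun a x => lB (inB a) x) (fun x a => rB x (inB a)) lU rU.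
Proof.
split; [|split; [exact: hX.2.1|]].
  split; [split => *; [by rewrite inBZD lB_bilin.1 | exact: lB_bilin.2]|].
  split; [split => *; [exact: rB_bilin.1 | by rewrite inBZD rB_bilin.2]|].
  split; [by move=> c x; rewrite -B_norm_inB; apply: lB_norm|].
  split; [by move=> c x; rewrite -B_norm_inB; apply: rB_norm|].
  split; [by move=> c d x; rewrite -B_mul_inB lB_mul|].
  split; [by move=> c d x; rewrite -B_mul_inB rB_mul|].
  by move=> c d x; rewrite lB_rB.
split; [by move=> al c x; rewrite lU_lB B_actl_inB|].
split; [by move=> al c x; rewrite lB_lU B_actr_inB|].
split; [by move=> al c x; rewrite lB_rU|].
split; [by move=> al c x; rewrite rU_rB B_actr_inB|].
split; [by move=> al c x; rewrite rB_rU B_actl_inB|].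
by move=> al c x; rewrite rB_lU.
Qed.

Lemma inB_derivation : module_derivation Num.norm mulAc (unitz_actl l) (unitz_actr r)
  (fun a x => lB (inB a) x) (fun x a => rB x (inB a)) lU rU (fun a => D (inB a)).
Proof.
split; [by move=> c; exact: D_dual|].
split; [by move=> c d x; rewrite inBD D_add|].
split; [by case: D_bounded => M HM; exists M => c x; rewrite -B_norm_inB; apply: HM|].
split; [by move=> c d x; rewrite -B_mul_inB D_mul|].
split; [by move=> al c x; rewrite -B_actl_inB D_lU|].
by move=> al c x; rewrite -B_actr_inB D_rU.
Qed.

Local Notation P x := (lB oneB x).
Local Notation Q x := (rB x oneB).
Local Notation De := (D oneB).

Lemma P_idem x : P (P x) = P x. Proof. by rewrite -lB_mul B_mul11. Qed.
Lemma Q_idem x : Q (Q x) = Q x. Proof. by rewrite -rB_mul B_mul11. Qed.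
Lemma QP_comm x : Q (P x) = P (Q x). Proof. by rewrite lB_rB. Qed.
Lemma normP x : `|P x| <= `|x|. Proof. by have := lB_norm oneB x; rewrite B_norm_one mul1r. Qed.
Lemma normQ x : `|Q x| <= `|x|. Proof. by have := rB_norm oneB x; rewrite B_norm_one mul1r. Qed.
Lemma PZD k x y : P (k *: x + y) = k *: P x + P y. Proof. exact: lB_bilin.2. Qed.
Lemma QZD k x y : Q (k *: x + y) = k *: Q x + Q y. Proof. exact: rB_bilin.1. Qed.

Lemma rB_Q a x : rB (Q x) (inB a) = rB x (inB a). Proof. by rewrite -rB_mul B_mul1l. Qed.
Lemma lB_P a x : lB (inB a) (P x) = lB (inB a) x. Proof. by rewrite -lB_mul B_mul1r. Qed.
Lemma Q_rB a x : Q (rB x (inB a)) = rB x (inB a). Proof. by rewrite -rB_mul B_mul1r. Qed.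
Lemma P_lB a x : P (lB (inB a) x) = lB (inB a) x. Proof. by rewrite -lB_mul B_mul1l. Qed.
Lemma P_rB a x : P (rB x (inB a)) = rB (P x) (inB a). Proof. by rewrite lB_rB. Qed.
Lemma Q_lB a x : Q (lB (inB a) x) = lB (inB a) (Q x). Proof. by rewrite lB_rB. Qed.

Lemma lB_unitzB u x : lB (unitzB u) x = P (rU x u).
Proof. by rewrite lB_rU -hcom lU_lB B_actl_one. Qed.
Lemma rB_unitzB u x : rB x (unitzB u) = Q (rU x u).
Proof. by rewrite rB_rU B_actl_one. Qed.
Lemma D_unitzB u x : D (unitzB u) x = De (rU x u).
Proof. by rewrite -B_actl_one D_lU. Qed.

Lemma De_split x : De x = De (P x) + De (Q x).
Proof. by rewrite -D_mul B_mul11. Qed.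

Lemma De_PQ x : De (P (Q x)) = 0.
Proof.
have := De_split (P (Q x)); rewrite P_idem QP_comm Q_idem => h.
by apply: (addrI (De (P (Q x)))); rewrite addr0 -h.
Qed.

Lemma De_lB a x : De (lB (inB a) x) = D (inB a) x - D (inB a) (Q x).
Proof. by have := D_mul oneB (inB a) x; rewrite B_mul1l => ->; rewrite addrK. Qed.

Lemma De_rB a x : De (rB x (inB a)) = D (inB a) x - D (inB a) (P x).
Proof. by have := D_mul (inB a) oneB x; rewrite B_mul1r => ->; rewrite addrC addKr. Qed.

(* x - Px - Qx + 2PQx = (1 - P)(1 - Q)x + PQx *)
Definition lift_dual (f : X -> K) (x : X) : K :=
  f (x - P x - Q x + P (Q x) + P (Q x)) + De (Q x - P x).

Section LiftDual.
Variable f : X -> K.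
Hypothesis hf : is_dual f.

Lemma lift_dualE x : lift_dual f x =
  f x - f (P x) - f (Q x) + f (P (Q x)) + f (P (Q x)) + De (Q x) - De (P x).
Proof. rewrite /lift_dual !(dualD hf, dualN hf) (dualB (D_dual oneB)); ring. Qed.

Lemma lift_dual_is_dual : is_dual (lift_dual f).
Proof.
split=> [k x y|].
  rewrite !lift_dualE !(PZD, QZD) !(dualD hf, dualZ hf).
  rewrite !(dualD (D_dual oneB), dualZ (D_dual oneB)); ring.
have [Mf [Mf0 HMf]] := dual_bounded hf.
have [Md [Md0 HMd]] := dual_bounded (D_dual oneB).
exists (Mf * 5%:R + Md * 2%:R) => x.
have nPQ : `|P (Q x)| <= `|x| by apply: le_trans (normP _) (normQ _).
have hv : `|x - P x - Q x + P (Q x) + P (Q x)| <= `|x| *+ 5.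
  apply: le_trans (ler_normD _ _) _; rewrite mulrSr lerD //.
  apply: le_trans (ler_normD _ _) _; rewrite mulrSr lerD //.
  apply: le_trans (ler_normB _ _) _; rewrite mulrSr lerD ?normQ //.
  by apply: le_trans (ler_normB _ _) _; rewrite mulrSr mulr1n lerD ?normP.
have hw : `|Q x - P x| <= `|x| *+ 2.
  by apply: le_trans (ler_normB _ _) _; rewrite mulr2n lerD ?normP ?normQ.
apply: le_trans (ler_normD _ _) _; rewrite mulrDl -!mulrA !mulr_natl.
by apply: lerD; [apply: le_trans (HMf _) _ | apply: le_trans (HMd _) _]; apply: ler_wpM2l.
Qed.

Lemma lift_dual_oneB x : lift_dual f (Q x) - lift_dual f (P x) = De x.
Proof. by rewrite !lift_dualE ?Q_idem ?QP_comm ?P_idem ?Q_idem (De_split x) ?De_PQ; ring. Qed.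

Lemma lift_dual_inB a x :
  lift_dual f (rB x (inB a)) - lift_dual f (lB (inB a) x) - D (inB a) x =
  - (f (rB (x - P x - Q x) (inB a)) - f (lB (inB a) (x - P x - Q x))
     - D (inB a) (x - P x - Q x)).
Proof.
rewrite !lift_dualE !(bilinBl rB_bilin, bilinBr lB_bilin).
rewrite !(dualB hf) !(dualB (D_dual (inB a))).
rewrite !(Q_rB, P_lB, P_rB, Q_lB, rB_Q, lB_P, P_idem, Q_idem, QP_comm).
rewrite !(De_rB, De_lB) !(P_idem, Q_idem); ring.
Qed.

Lemma lift_dual_error w x :
  lift_dual f (rB x w) - lift_dual f (lB w x) - D w x =
  - (f (rB (x - P x - Q x) (inB w.1)) - f (lB (inB w.1) (x - P x - Q x))
     - D (inB w.1) (x - P x - Q x)).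
Proof.
rewrite {1 2 3}(B_decomp w) (bilinDl lB_bilin) (bilinDr rB_bilin) D_add.
rewrite !(dualD lift_dual_is_dual) rB_unitzB lB_unitzB D_unitzB.
rewrite -lift_dual_inB -lift_dual_oneB; ring.
Qed.

End LiftDual.

Lemma norm_sub_PQ x : `|x - P x - Q x| <= `|x| *+ 3.
Proof.
apply: le_trans (ler_normB _ _) _; rewrite mulrSr lerD ?normQ //.
by apply: le_trans (ler_normB _ _) _; rewrite mulrSr mulr1n lerD ?normP.
Qed.

Lemma amen_conclusion_lift Pk :
  amen_conclusion Pk (fun a x => lB (inB a) x) (fun x a => rB x (inB a))
    (fun a => D (inB a)) ->
  amen_conclusion Pk lB rB D.
Proof.
case: Pk => /=.
- case=> f [Hf Hfe]; exists (lift_dual f); split; first exact: lift_dual_is_dual.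
  move=> w x; have := lift_dual_error Hf w x.
  by rewrite (Hfe w.1) subrr oppr0 => /eqP; rewrite subr_eq0 => /eqP.
- case=> I [le [f [Hdir [Hf Hc]]]]; exists I, le, (fun i => lift_dual (f i)).
  do 2 split => //; first by move=> i; exact: lift_dual_is_dual.
  move=> w e e0; have [i0 Hi0] := Hc w.1 (e / 3%:R) (divr_gt0 e0 (ltr0n _ 3)).
  exists i0 => i Hi x; rewrite lift_dual_error // normrN.
  apply: le_trans (Hi0 i Hi _) _.
  apply: le_trans (ler_wpM2l _ (norm_sub_PQ x)) _; first by rewrite divr_ge0 ?ltW.
  by rewrite mulrnAr -mulrnAl -mulr_natr divfK ?pnatr_eq0.
- case=> I [le [f [Hdir [Hf Hc]]]]; exists I, le, (fun i => lift_dual (f i)).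
  do 2 split => //; first by move=> i; exact: lift_dual_is_dual.
  move=> w x e e0; have [i0 Hi0] := Hc w.1 (x - P x - Q x) _ e0.
  by exists i0 => i Hi; rewrite lift_dual_error // normrN; apply: Hi0.
Qed.

End DerivationOnB.

Lemma module_P_B_of_A Pk :
  module_P Pk Num.norm mulAc (unitz_norm (A:=A)) (unitz_mul mulA)
    (unitz_actl l) (unitz_actr r) ->
  module_P Pk (B_norm (A:=A) (Ac:=Ac)) mulB
    (unitz_norm (A:=A)) (unitz_mul mulA) (B_actl mulA l) (B_actr mulA r).
Proof.
move=> amenA X lB rB lU rU hX hcom D hD.
apply: (amen_conclusion_lift hX hcom hD).
exact: amenA _ _ _ _ _ (inB_CA_module hX) hcom _ (inB_derivation hD).
Qed.

Section DerivationOnA.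
Variables (X : completeNormedModType K) (lC : Ac -> X -> X) (rC : X -> Ac -> X)
  (lU : unitz A -> X -> X) (rU : X -> unitz A -> X).
Hypothesis hX : banach_CA_module Num.norm mulAc (unitz_norm (A:=A)) (unitz_mul mulA)
  (unitz_actl l) (unitz_actr r) lC rC lU rU.
Variable D : Ac -> X -> K.
Hypothesis hD : module_derivation Num.norm mulAc (unitz_actl l) (unitz_actr r)
  lC rC lU rU D.

Let lC_bilin : bilin lC := hX.1.1.
Let rC_bilin : bilin rC := hX.1.2.1.
Let lC_norm := hX.1.2.2.1.
Let rC_norm := hX.1.2.2.2.1.
Let lC_mul := hX.1.2.2.2.2.1.
Let rC_mul := hX.1.2.2.2.2.2.1.
Let lC_rC := hX.1.2.2.2.2.2.2.
Let lU_bilin : bilin lU := hX.2.1.1.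
Let rU_bilin : bilin rU := hX.2.1.2.1.
Let lU_norm := hX.2.1.2.2.1.
Let rU_norm := hX.2.1.2.2.2.1.
Let lU_mul := hX.2.1.2.2.2.2.1.
Let rU_mul := hX.2.1.2.2.2.2.2.1.
Let lU_rU := hX.2.1.2.2.2.2.2.2.
Let lU_lC := hX.2.2.1.
Let lC_lU := hX.2.2.2.1.
Let lC_rU := hX.2.2.2.2.1.
Let rU_rC := hX.2.2.2.2.2.1.
Let rC_rU := hX.2.2.2.2.2.2.1.
Let rC_lU := hX.2.2.2.2.2.2.2.
Let D_add := hD.2.1.
Let D_bounded := hD.2.2.1.
Let D_mul := hD.2.2.2.1.
Let D_lU := hD.2.2.2.2.1.
Let D_rU := hD.2.2.2.2.2.

Definition proj_actl (w : Bsp A Ac) (x : X) : X := lC w.1 x + lU w.2 x.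
Definition proj_actr (x : X) (w : Bsp A Ac) : X := rC x w.1 + rU x w.2.

Lemma proj_bimodule : banach_bimodule (B_norm (A:=A) (Ac:=Ac)) mulB proj_actl proj_actr.
Proof.
split.
  split=> k u u' v; rewrite /proj_actl.
    by rewrite [(k *: u + u').1]/= [(k *: u + u').2]/= lC_bilin.1 lU_bilin.1 scalerDr addrACA.
  by rewrite lC_bilin.2 lU_bilin.2 scalerDr addrACA.
split.
  split=> k u u' v; rewrite /proj_actr.
    by rewrite rC_bilin.1 rU_bilin.1 scalerDr addrACA.
  by rewrite [(k *: u' + v).1]/= [(k *: u' + v).2]/= rC_bilin.2 rU_bilin.2 scalerDr addrACA.
rewrite /proj_actl /proj_actr.
split; [move=> c x; rewrite /B_norm mulrDl;
        exact: le_trans (ler_normD _ _) (lerD (lC_norm _ _) (lU_norm _ _))|].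
split; [move=> c x; rewrite /B_norm mulrDl;
        exact: le_trans (ler_normD _ _) (lerD (rC_norm _ _) (rU_norm _ _))|].
split; [move=> c d x; rewrite B_mul_fst B_mul_snd 2!(bilinDl lC_bilin) (bilinDr lC_bilin) (bilinDr lU_bilin);
        by rewrite lC_mul lU_mul lC_lU lU_lC !addrA|].
split; [move=> c d x; rewrite B_mul_fst B_mul_snd 2!(bilinDr rC_bilin) (bilinDl rC_bilin) (bilinDl rU_bilin);
        by rewrite rC_mul rU_mul rU_rC rC_rU !addrA (addrAC (rC (rC x c.1) d.1))|].
move=> c d x; rewrite (bilinDl rC_bilin) (bilinDl rU_bilin) (bilinDr lC_bilin).
rewrite (bilinDr lU_bilin) lC_rC rC_lU lU_rU lC_rU !addrA.
by rewrite (addrAC (lC c.1 (rC x d.1))).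
Qed.

Lemma proj_CA_module : banach_CA_module (B_norm (A:=A) (Ac:=Ac)) mulB
  (unitz_norm (A:=A)) (unitz_mul mulA) (B_actl mulA l) (B_actr mulA r)
  proj_actl proj_actr lU rU.
Proof.
split; [exact: proj_bimodule|split; [exact: hX.2.1|]].
rewrite /proj_actl /proj_actr.
split; [by move=> al c x; rewrite B_actl_fst B_actl_snd (bilinDr lU_bilin) lU_lC lU_mul|].
split; [by move=> al c x; rewrite B_actr_fst B_actr_snd lC_lU lU_mul|].
split; [by move=> al c x; rewrite (bilinDl rU_bilin) lC_rU lU_rU|].
split; [by move=> al c x; rewrite B_actr_fst B_actr_snd (bilinDl rU_bilin) rU_rC rU_mul|].
split; [by move=> al c x; rewrite B_actl_fst B_actl_snd rC_rU rU_mul|].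
by move=> al c x; rewrite (bilinDr lU_bilin) rC_lU lU_rU.
Qed.

Lemma proj_derivation : module_derivation (B_norm (A:=A) (Ac:=Ac)) mulB
  (B_actl mulA l) (B_actr mulA r) proj_actl proj_actr lU rU (fun w => D w.1).
Proof.
split; [by move=> c; exact: hD.1|].
split; [by move=> c d x; rewrite -D_add|].
split.
  case: D_bounded => M HM; exists `|M| => c x.
  apply: le_trans (_ : `|M| * `|c.1| * `|x| <= _).
    by rewrite -!mulrA; apply: ler_norm_coef; rewrite ?mulr_ge0 // mulrA.
  rewrite -!mulrA ler_wpM2l // ler_wpM2r // lerDl.
  by rewrite /unitz_norm addr_ge0.
split.
  move=> c d x; rewrite B_mul_fst 2!D_add D_mul D_lU D_rU /proj_actl /proj_actr.
  by rewrite !(dualD (hD.1 _)); ring.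
split; [by move=> al c x; rewrite B_actl_fst D_lU|].
by move=> al c x; rewrite B_actr_fst D_rU.
Qed.

End DerivationOnA.

Lemma module_P_A_of_B Pk :
  module_P Pk (B_norm (A:=A) (Ac:=Ac)) mulB
    (unitz_norm (A:=A)) (unitz_mul mulA) (B_actl mulA l) (B_actr mulA r) ->
  module_P Pk Num.norm mulAc (unitz_norm (A:=A)) (unitz_mul mulA)
    (unitz_actl l) (unitz_actr r).
Proof.
move=> amenB X lC rC lU rU hX hcom D hD.
have amenD := amenB _ _ _ _ _ (proj_CA_module hX) hcom _ (proj_derivation hD).
apply: (amen_conclusion_pullback (g := inB)) amenD => c x //.
- by rewrite /proj_actl (bilin0l hX.2.1.1) addr0.
- by rewrite /proj_actr (bilin0r hX.2.1.2.1) addr0.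
Qed.

Section RestrictActions.
Variables (X : completeNormedModType K) (lC : Ac -> X -> X) (rC : X -> Ac -> X)
  (lU : unitz A -> X -> X) (rU : X -> unitz A -> X).

Lemma unitz_in_CA_module :
  banach_CA_module Num.norm mulAc (unitz_norm (A:=A)) (unitz_mul mulA)
    (unitz_actl l) (unitz_actr r) lC rC lU rU ->
  banach_CA_module Num.norm mulAc Num.norm mulA l r lC rC
    (fun a x => lU (unitz_in a) x) (fun x a => rU x (unitz_in a)).
Proof.
move=> [hC [[lU_bilin [rU_bilin [lU_norm [rU_norm [lU_mul [rU_mul lU_rU]]]]]]
  [lU_lC [lC_lU [lC_rU [rU_rC [rC_rU rC_lU]]]]]]].
split; first exact: hC.
split.
  split; [split=> *; [by rewrite unitz_inZD lU_bilin.1 | exact: lU_bilin.2]|].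
  split; [split=> *; [exact: rU_bilin.1 | by rewrite unitz_inZD rU_bilin.2]|].
  split; [by move=> c x; rewrite -unitz_norm_in; apply: lU_norm|].
  split; [by move=> c x; rewrite -unitz_norm_in; apply: rU_norm|].
  split; [by move=> c d x; rewrite -unitz_mul_in lU_mul|].
  split; [by move=> c d x; rewrite -unitz_mul_in rU_mul|].
  by move=> c d x; rewrite lU_rU.
split; [by move=> al c x; rewrite lU_lC unitz_actl_in|].
split; [by move=> al c x; rewrite lC_lU unitz_actr_in|].
split; [by move=> al c x; rewrite lC_rU|].
split; [by move=> al c x; rewrite rU_rC unitz_actr_in|].
split; [by move=> al c x; rewrite rC_rU unitz_actl_in|].
by move=> al c x; rewrite rC_lU.
Qed.

Lemma unitz_in_derivation (D : Ac -> X -> K) :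
  module_derivation Num.norm mulAc (unitz_actl l) (unitz_actr r) lC rC lU rU D ->
  module_derivation Num.norm mulAc l r lC rC
    (fun a x => lU (unitz_in a) x) (fun x a => rU x (unitz_in a)) D.
Proof.
move=> [D_dual [D_add [D_bounded [D_mul [D_lU D_rU]]]]].
do 4 split=> //.
by split=> al c x; rewrite -?D_lU -?D_rU ?unitz_actl_in ?unitz_actr_in.
Qed.

End RestrictActions.

Lemma module_P_unitz_of_base Pk :
  module_P Pk Num.norm mulAc Num.norm mulA l r ->
  module_P Pk Num.norm mulAc (unitz_norm (A:=A)) (unitz_mul mulA)
    (unitz_actl l) (unitz_actr r).
Proof.
move=> amen X lC rC lU rU hX hcom D hD.
apply: (amen _ _ _ _ _ (unitz_in_CA_module hX) _ _ (unitz_in_derivation hD)).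
by move=> al x; apply: hcom.
Qed.

Section ExtendActions.
Variables (X : completeNormedModType K) (lC : Ac -> X -> X) (rC : X -> Ac -> X)
  (lA : A -> X -> X) (rA : X -> A -> X).
Hypothesis hX : banach_CA_module Num.norm mulAc Num.norm mulA l r lC rC lA rA.

Let lC_bilin : bilin lC := hX.1.1.
Let rC_bilin : bilin rC := hX.1.2.1.
Let lA_bilin : bilin lA := hX.2.1.1.
Let rA_bilin : bilin rA := hX.2.1.2.1.
Let lA_norm := hX.2.1.2.2.1.
Let rA_norm := hX.2.1.2.2.2.1.
Let lA_mul := hX.2.1.2.2.2.2.1.
Let rA_mul := hX.2.1.2.2.2.2.2.1.
Let lA_rA := hX.2.1.2.2.2.2.2.2.
Let lA_lC := hX.2.2.1.
Let lC_lA := hX.2.2.2.1.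
Let lC_rA := hX.2.2.2.2.1.
Let rA_rC := hX.2.2.2.2.2.1.
Let rC_rA := hX.2.2.2.2.2.2.1.
Let rC_lA := hX.2.2.2.2.2.2.2.

Definition unitz_extl (u : unitz A) (x : X) : X := lA u.1 x + u.2 *: x.
Definition unitz_extr (x : X) (u : unitz A) : X := rA x u.1 + u.2 *: x.

Lemma scalerC (a b : K) (v : X) : a *: (b *: v) = b *: (a *: v).
Proof. by rewrite !scalerA mulrC. Qed.

Lemma unitz_ext_bimodule :
  banach_bimodule (unitz_norm (A:=A)) (unitz_mul mulA) unitz_extl unitz_extr.
Proof.
rewrite /unitz_extl /unitz_extr.
split.
  split=> k u u' v /=.
    by rewrite lA_bilin.1 scalerDl -scalerA scalerDr addrACA.
  by rewrite lA_bilin.2 !scalerDr (scalerC u.2 k) addrACA.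
split.
  split=> k u u' v /=.
    by rewrite rA_bilin.1 !scalerDr (scalerC v.2 k) addrACA.
  by rewrite rA_bilin.2 scalerDl -scalerA scalerDr addrACA.
split.
  move=> u x; rewrite /unitz_norm mulrDl; apply: le_trans (ler_normD _ _) _.
  by rewrite normrZ lerD ?lA_norm.
split.
  move=> u x; rewrite /unitz_norm mulrDl; apply: le_trans (ler_normD _ _) _.
  by rewrite normrZ lerD ?rA_norm.
split.
  move=> u v x /=; rewrite !(bilinDl lA_bilin) !(bilinZl lA_bilin) lA_mul.
  rewrite (bilinDr lA_bilin) (bilinZr lA_bilin) scalerDr scalerA !addrA.
  by rewrite (addrAC (lA u.1 (lA v.1 x))).
split.
  move=> u v x /=; rewrite !(bilinDr rA_bilin) !(bilinZr rA_bilin) rA_mul.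
  rewrite (bilinDl rA_bilin) (bilinZl rA_bilin) scalerDr scalerA !addrA.
  by rewrite (mulrC v.2).
move=> u v x; rewrite (bilinDl rA_bilin) (bilinZl rA_bilin) (bilinDr lA_bilin).
rewrite (bilinZr lA_bilin) !scalerDr lA_rA !addrA.
by rewrite (addrAC (lA u.1 (rA x v.1))) (scalerC v.2).
Qed.

Lemma unitz_ext_CA_module :
  banach_CA_module Num.norm mulAc (unitz_norm (A:=A)) (unitz_mul mulA)
    (unitz_actl l) (unitz_actr r) lC rC unitz_extl unitz_extr.
Proof.
split; [exact: hX.1|split; [exact: unitz_ext_bimodule|]].
rewrite /unitz_extl /unitz_extr /unitz_actl /unitz_actr.
split; [by move=> al c x; rewrite (bilinDl lC_bilin) (bilinZl lC_bilin) lA_lC|].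
split; [by move=> al c x; rewrite 2!(bilinDl lC_bilin, bilinDr lC_bilin)
          (bilinZl lC_bilin) (bilinZr lC_bilin) lC_lA|].
split; [by move=> al c x; rewrite (bilinDr lC_bilin) (bilinZr lC_bilin) lC_rA|].
split; [by move=> al c x; rewrite (bilinDr rC_bilin) (bilinZr rC_bilin) rA_rC|].
split; [by move=> al c x; rewrite 2!(bilinDr rC_bilin, bilinDl rC_bilin)
          (bilinZr rC_bilin) (bilinZl rC_bilin) rC_rA|].
by move=> al c x; rewrite (bilinDl rC_bilin) (bilinZl rC_bilin) rC_lA.
Qed.

Variable D : Ac -> X -> K.
Hypothesis hD : module_derivation Num.norm mulAc l r lC rC lA rA D.

Let D_dual := hD.1.
Let D_add := hD.2.1.
Let D_lA := hD.2.2.2.2.1.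
Let D_rA := hD.2.2.2.2.2.

(* D(k (alpha.b)) = D(b).(k alpha) = k D(alpha.b), likewise for b.alpha, and the
   defect D(k c) - k D(c) is additive and bounded, hence vanishes on the closed span. *)
Lemma derivation_scalable_of_essential :
  left_essential l \/ right_essential r -> forall k c x, D (k *: c) x = k * D c x.
Proof.
move=> hess k c x; apply/eqP; rewrite -subr_eq0; apply/eqP.
pose phi c := D (k *: c) x - k * D c x.
have phiD a b : phi (a + b) = phi a + phi b by rewrite /phi scalerDr !D_add; ring.
have phi_bounded : exists C, 0 <= C /\ forall c, `|phi c| <= C * `|c|.
  have [M HM] := hD.2.2.1.
  have {}HM b y : `|D b y| <= `|M| * `|b| * `|y|.
    by rewrite -!mulrA; apply: ler_norm_coef; rewrite ?mulr_ge0 // mulrA.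
  exists (`|M| * `|k| * `|x| + `|k| * (`|M| * `|x|)); split.
    by rewrite addr_ge0 // !mulr_ge0.
  move=> b; rewrite /phi mulrDl; apply: le_trans (ler_normB _ _) (lerD _ _).
    by apply: le_trans (HM _ _) _; rewrite normrZ mulrA mulrAC.
  by rewrite normrM -mulrA ler_wpM2l // mulrAC.
suff : phi c = 0 by [].
case: hess => [hl | hr].
- apply: (dense_span_additive_eq0 phiD phi_bounded _ hl) => lam al b.
  rewrite /phi scalerA -!(bilinZl l_bilin) !D_lA !(bilinZr rA_bilin).
  by rewrite !(dualZ (D_dual _)); ring.
- apply: (dense_span_additive_eq0 (g := fun al b => r b al) phiD phi_bounded _ hr).
  move=> lam al b.
  rewrite /phi scalerA -!(bilinZr r_bilin) !D_rA !(bilinZl lA_bilin).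
  by rewrite !(dualZ (D_dual _)); ring.
Qed.

Lemma unitz_ext_derivation : (forall k c x, D (k *: c) x = k * D c x) ->
  module_derivation Num.norm mulAc (unitz_actl l) (unitz_actr r)
    lC rC unitz_extl unitz_extr D.
Proof.
move=> DZ; split; first exact: D_dual.
split; first exact: D_add.
split; first exact: hD.2.2.1.
split; first exact: hD.2.2.2.1.
split=> al c x; rewrite /unitz_actl /unitz_actr /unitz_extl /unitz_extr.
  by rewrite D_add D_lA DZ (dualD (D_dual _)) (dualZ (D_dual _)).
by rewrite D_add D_rA DZ (dualD (D_dual _)) (dualZ (D_dual _)).
Qed.

End ExtendActions.

Lemma module_P_base_of_unitz Pk : left_essential l \/ right_essential r ->
  module_P Pk Num.norm mulAc (unitz_norm (A:=A)) (unitz_mul mulA)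
    (unitz_actl l) (unitz_actr r) ->
  module_P Pk Num.norm mulAc Num.norm mulA l r.
Proof.
move=> hess amen X lC rC lA rA hX hcom D hD.
apply: (amen _ _ _ _ _ (unitz_ext_CA_module hX) _ _
  (unitz_ext_derivation hD (derivation_scalable_of_essential hX hD hess))).
by move=> u x; rewrite /unitz_extl /unitz_extr hcom.
Qed.

End Unitization.

Unset Implicit Arguments.

Theorem theorem3p1 (R : realType)
    (A : completeNormedModType (complex R)) (mulA : A -> A -> A)
    (Ac : completeNormedModType (complex R)) (mulAc : Ac -> Ac -> Ac)
    (l : A -> Ac -> Ac) (r : Ac -> A -> Ac)
    (hA : banach_algebra mulA) (hAc : banach_algebra mulAc)
    (hmod : banach_bimodule Num.norm mulA l r)
    (hcomp : compatible_actions mulAc l r)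
    (P : amen_kind) :
  (module_P P Num.norm mulAc (unitz_norm (A:=A)) (unitz_mul mulA)
       (unitz_actl l) (unitz_actr r)
   <->
   module_P P (B_norm (A:=A) (Ac:=Ac)) (B_mul mulA mulAc l r)
       (unitz_norm (A:=A)) (unitz_mul mulA)
       (B_actl mulA l) (B_actr mulA r)) /\
  (left_essential l \/ right_essential r ->
   (module_P P Num.norm mulAc (unitz_norm (A:=A)) (unitz_mul mulA)
       (unitz_actl l) (unitz_actr r)
    <->
    module_P P Num.norm mulAc Num.norm mulA l r)).
Proof.
have [mulA_bilin _] := hA.
have [mulAc_bilin _] := hAc.
have [l_bilin [r_bilin _]] := hmod.
split; first split.
- exact: module_P_B_of_A.
- exact: module_P_A_of_B.
- move=> hess; split.
  + exact: module_P_base_of_unitz.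
  + exact: module_P_unitz_of_base.
Qed.
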